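(* Let $n\ge3$ and let $V:\mathbb{R}^n\to\mathbb{R}$ be $C^1$ and satisfy: there is $L>0$ such that for all $x$ with $|x_1|>L$, $-x_j\,\partial_{x_j}V(x)\ge0$ for every $j=1,\dots,n$. Then for every $x'\in\mathbb{R}^n$ and every $x\notin[-L,L]\times\mathbb{R}^{n-1}$ (with $x\notin\operatorname{sym}\{x'\}$), $$ i\Big[V,\sum_{c\in\operatorname{sym}\{x'\}}\gamma_c^{Mor}\Big](x)=\sum_{j=1}^n\Big\{-2\,\partial_{x_j}V(x)\sum_{c\in\operatorname{sym}\{x'\}}\frac{x_j-c_j}{|x-c|}\Big\}\ \ge\ 0. $$
   Context: $\gamma_c^{Mor}=-i\big(\frac{x-c}{|x-c|}\cdot\nabla+\nabla\cdot\frac{x-c}{|x-c|}\big)$, so $i[V,\gamma_c^{Mor}]$ is multiplication by $-2\frac{x-c}{|x-c|}\cdot\nabla V$. For $x'=(x'_1,\dots,x'_n)$, $\operatorname{sym}\{x'\}=\{(\pm x'_1,\dots,\pm x'_n)\}$, the set of all points obtained by independent sign changes of the coordinates (as a set, so repeated points counted once). *)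

From HB Require Import structures.
From mathcomp Require Import all_boot all_order all_algebra.
From mathcomp Require Import all_classical all_reals all_analysis.
Set Implicit Arguments. Unset Strict Implicit. Unset Printing Implicit Defensive.
Import Order.TTheory GRing.Theory Num.Theory.
Import numFieldNormedType.Exports.
Local Open Scope ring_scope.

(* Euclidean norm |x| (the library norm on matrices is the sup norm). *)
Definition enorm (R : realType) (n : nat) (x : 'rV[R]_n) : R :=
  Num.sqrt (\sum_(k < n) (x 0 k) ^+ 2).

Definition partial (R : realType) (n : nat) (V : 'rV[R]_n -> R) (j : 'I_n)
  (x : 'rV[R]_n) : R := 'D_(delta_mx 0 j) V x.

Definition C1 (R : realType) (n : nat) (V : 'rV[R]_n -> R) : Prop :=
  (forall x, differentiable V x) /\ (forall j, continuous (partial V j)).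

(* sym{x'} : all points obtained by independent sign changes of the
   coordinates, as a duplicate-free list (repeated points counted once). *)
Definition sym (R : realType) (n : nat) (x' : 'rV[R]_n) : seq 'rV[R]_n :=
  undup [seq (\row_k ((-1) ^+ (s k) * x' 0 k)) | s : {ffun 'I_n -> bool}].

(* The multiplication operator  i[V, gamma_c^Mor]  =  -2 (x-c)/|x-c| . grad V. *)
Definition comm_mor (R : realType) (n : nat) (V : 'rV[R]_n -> R)
  (c x : 'rV[R]_n) : R :=
  -2 * \sum_(j < n) ((x 0 j - c 0 j) / enorm (x - c) * partial V j x).

From HB Require Import structures.
From mathcomp Require Import all_boot all_order all_algebra.
From mathcomp Require Import all_classical all_reals all_analysis.
From mathcomp Require Import ring lra.

Set Implicit Arguments.
Unset Strict Implicit.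
Unset Printing Implicit Defensive.
Import Order.TTheory GRing.Theory Num.Theory.
Import numFieldNormedType.Exports.
Local Open Scope ring_scope.

(* Outside the strip, -x_j d_j V(x) >= 0, so it suffices that the j-th
   coordinate sum S_j(x) = \sum_c (x_j - c_j)/|x - c| has the sign of x_j.
   The set sym{x'} is invariant under c_j |-> -c_j, so S_j pairs up into terms
   f(x_j - c_j) + f(x_j + c_j) with f t = t / sqrt(t^2 + A), where A >= 0 is the
   squared distance in the other coordinates; f is odd and nondecreasing, hence
   each pair has the sign of x_j. *)

Section DirCoord.
Variable R : rcfType.
Implicit Types A s t a c : R.

Definition dir_coord A t := t / Num.sqrt (t ^+ 2 + A).

Lemma dir_coord0 A : dir_coord A 0 = 0.
Proof. by rewrite /dir_coord mul0r. Qed.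

Lemma dir_coordN A t : dir_coord A (- t) = - dir_coord A t.
Proof. by rewrite /dir_coord sqrrN mulNr. Qed.

Lemma dir_coord_ge0 A t : 0 <= t -> 0 <= dir_coord A t.
Proof. by move=> t_ge0; rewrite divr_ge0 ?sqrtr_ge0. Qed.

Lemma dir_coord_le0 A t : t <= 0 -> dir_coord A t <= 0.
Proof. by move=> t_le0; rewrite -oppr_ge0 -dir_coordN dir_coord_ge0 ?oppr_ge0. Qed.

Lemma dir_coord_homo_ge0 A s t : 0 <= A -> 0 <= s -> s <= t ->
  dir_coord A s <= dir_coord A t.
Proof.
move=> A_ge0 s_ge0 le_st.
have [->|s_neq0] := eqVneq s 0.
  by rewrite dir_coord0 dir_coord_ge0 // (le_trans s_ge0).
have s_gt0 : 0 < s by rewrite lt_def s_neq0 s_ge0.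
have sqrt_s_gt0 : 0 < Num.sqrt (s ^+ 2 + A) by rewrite sqrtr_gt0; nra.
have sqrt_t_gt0 : 0 < Num.sqrt (t ^+ 2 + A) by rewrite sqrtr_gt0; nra.
rewrite /dir_coord ler_pdivrMr // mulrAC ler_pdivlMr //.
rewrite -(@ler_pXn2r _ 2) ?nnegrE ?mulr_ge0 ?sqrtr_ge0 //; try lra.
have le_sqr : s ^+ 2 <= t ^+ 2 by nra.
have cross_ge0 : 0 <= (t ^+ 2 - s ^+ 2) * A by apply: mulr_ge0; lra.
rewrite !exprMn !sqr_sqrtr; nra.
Qed.

Lemma dir_coord_homo A : 0 <= A -> {homo dir_coord A : s t / s <= t}.
Proof.
move=> A_ge0 s t le_st.
have [s_ge0|s_lt0] := lerP 0 s; first exact: dir_coord_homo_ge0.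
have [t_ge0|t_lt0] := lerP 0 t.
  by rewrite (le_trans (dir_coord_le0 A (ltW s_lt0))) // dir_coord_ge0.
rewrite -lerN2 -!dir_coordN dir_coord_homo_ge0 ?lerN2 //.
by rewrite oppr_ge0 ltW.
Qed.

Lemma dir_coord_pair_ge0 A a c : 0 <= A -> 0 <= a ->
  0 <= dir_coord A (a - c) + dir_coord A (a + c).
Proof.
move=> A_ge0 a_ge0.
have le_ca : c - a <= a + c by lra.
have := dir_coord_homo A_ge0 le_ca.
rewrite -opprB dir_coordN; lra.
Qed.

Lemma dir_coord_pair_le0 A a c : 0 <= A -> a <= 0 ->
  dir_coord A (a - c) + dir_coord A (a + c) <= 0.
Proof.
move=> A_ge0 a_le0.
have na_ge0 : 0 <= - a by rewrite oppr_ge0.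
have := dir_coord_pair_ge0 (- c) A_ge0 na_ge0.
have -> : - a - - c = - (a - c) by ring.
rewrite -opprD !dir_coordN; lra.
Qed.

End DirCoord.

Lemma mulN2_ge0_of_sign (R : realDomainType) (p a S : R) :
  0 <= - a * p -> (0 <= a -> 0 <= S) -> (a <= 0 -> S <= 0) -> 0 <= -2 * p * S.
Proof.
move=> Nap_ge0 S_ge0 S_le0.
have [a_lt0|a_gt0|a0] := ltgtP a 0.
- have := S_le0 (ltW a_lt0); nra.
- have := S_ge0 (ltW a_gt0); nra.
- have S0 : S = 0 by apply/eqP; rewrite eq_le S_le0 ?S_ge0 ?a0.
  by rewrite S0 mulr0.
Qed.

Section CoordSums.
Variables (R : realType) (n : nat).
Implicit Types (x c : 'rV[R]_n) (s : seq 'rV[R]_n) (j : 'I_n).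

Definition refl_coord j c : 'rV[R]_n := \row_k (if k == j then - c 0 k else c 0 k).

Lemma refl_coordK j : involutive (refl_coord j).
Proof. by move=> c; apply/rowP => k; rewrite !mxE; case: eqP; rewrite ?opprK. Qed.

Lemma perm_map_refl_coord j s : uniq s -> {homo refl_coord j : c / c \in s} ->
  perm_eq (map (refl_coord j) s) s.
Proof.
move=> s_uniq s_refl; apply: uniq_perm => //.
  by rewrite map_inj_uniq //; apply: can_inj (refl_coordK j).
move=> c; apply/mapP/idP => [[d d_s ->]|c_s]; first exact: s_refl.
by exists (refl_coord j c); rewrite ?refl_coordK ?s_refl.
Qed.

Lemma refl_coord_sym j (x' c : 'rV[R]_n) : c \in sym x' -> refl_coord j c \in sym x'.
Proof.
rewrite /sym !mem_undup => /mapP [sg _ ->].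
apply/mapP; exists [ffun k => if k == j then ~~ sg k else sg k]; first by rewrite mem_enum.
apply/rowP => k; rewrite !mxE ffunE; case: eqP => _ //.
by case: (sg k); rewrite ?expr0 ?expr1 ?mulN1r ?mul1r ?opprK.
Qed.

Definition sqdist_off j x c := \sum_(k < n | k != j) (x 0 k - c 0 k) ^+ 2.

Lemma sqdist_off_ge0 j x c : 0 <= sqdist_off j x c.
Proof. by apply: sumr_ge0 => k _; apply: sqr_ge0. Qed.

Lemma coord_dirE j x c :
  (x 0 j - c 0 j) / enorm (x - c) = dir_coord (sqdist_off j x c) (x 0 j - c 0 j).
Proof.
rewrite /enorm /dir_coord (bigD1 j) //= !mxE.
by congr (_ / Num.sqrt (_ + _)); apply: eq_bigr => k _; rewrite !mxE.
Qed.

Lemma coord_dir_refl j x c :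
  (x 0 j - refl_coord j c 0 j) / enorm (x - refl_coord j c)
  = dir_coord (sqdist_off j x c) (x 0 j + c 0 j).
Proof.
rewrite coord_dirE !mxE eqxx opprK; congr (dir_coord _ _).
by apply: eq_bigr => k /negbTE k_neq_j; rewrite !mxE k_neq_j.
Qed.

Definition coord_dir_sum s j x := \sum_(c <- s) ((x 0 j - c 0 j) / enorm (x - c)).

Lemma coord_dir_sum_pairs s j x : uniq s -> {homo refl_coord j : c / c \in s} ->
  2 * coord_dir_sum s j x = \sum_(c <- s)
    (dir_coord (sqdist_off j x c) (x 0 j - c 0 j)
     + dir_coord (sqdist_off j x c) (x 0 j + c 0 j)).
Proof.
move=> s_uniq s_refl; rewrite big_split /= mulr2n mulrDl mul1r.
congr (_ + _); first by apply: eq_bigr => c _; rewrite coord_dirE.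
rewrite /coord_dir_sum -(perm_big _ (perm_map_refl_coord s_uniq s_refl)) big_map.
by apply: eq_bigr => c _; rewrite coord_dir_refl.
Qed.

Lemma coord_dir_sum_ge0 s j x : uniq s -> {homo refl_coord j : c / c \in s} ->
  0 <= x 0 j -> 0 <= coord_dir_sum s j x.
Proof.
move=> s_uniq s_refl xj_ge0; rewrite -(pmulr_rge0 _ (_ : 0 < 2)) //.
rewrite coord_dir_sum_pairs //; apply: sumr_ge0 => c _.
exact/dir_coord_pair_ge0/xj_ge0/sqdist_off_ge0.
Qed.

Lemma coord_dir_sum_le0 s j x : uniq s -> {homo refl_coord j : c / c \in s} ->
  x 0 j <= 0 -> coord_dir_sum s j x <= 0.
Proof.
move=> s_uniq s_refl xj_le0; rewrite -(pmulr_rle0 _ (_ : 0 < 2)) //.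
rewrite coord_dir_sum_pairs //; apply: sumr_le0 => c _.
exact/dir_coord_pair_le0/xj_le0/sqdist_off_ge0.
Qed.

Lemma sum_comm_mor s (V : 'rV[R]_n -> R) x :
  \sum_(c <- s) comm_mor V c x = \sum_(j < n) (-2 * partial V j x * coord_dir_sum s j x).
Proof.
rewrite /comm_mor -mulr_sumr exchange_big /= mulr_sumr; apply: eq_bigr => j _.
by rewrite -mulrA /coord_dir_sum !mulr_sumr; apply: eq_bigr => c _; ring.
Qed.

End CoordSums.

Theorem lemma4p5 (R : realType) (n : nat) (hn : (3 <= n)%N)
  (i1 : 'I_n) (hi1 : val i1 = 0%N)
  (V : 'rV[R]_n -> R) (hV : C1 V) (L : R) (hL : 0 < L)
  (hdec : forall x : 'rV[R]_n, L < `|x 0 i1| ->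
            forall j : 'I_n, 0 <= - x 0 j * partial V j x)
  (x' x : 'rV[R]_n) (hx : L < `|x 0 i1|) (hxs : x \notin sym x') :
  \sum_(c <- sym x') comm_mor V c x
    = \sum_(j < n) (-2 * partial V j x *
         \sum_(c <- sym x') ((x 0 j - c 0 j) / enorm (x - c)))
  /\ 0 <= \sum_(j < n) (-2 * partial V j x *
         \sum_(c <- sym x') ((x 0 j - c 0 j) / enorm (x - c))).
Proof.
split; first exact: sum_comm_mor.
apply: sumr_ge0 => j _.
have sym_uniq : uniq (sym x') := undup_uniq _.
have sym_refl : {homo refl_coord j : c / c \in sym x'} by move=> c; apply: refl_coord_sym.
apply: mulN2_ge0_of_sign (hdec x hx j) _ _.
- exact: coord_dir_sum_ge0.
- exact: coord_dir_sum_le0.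
Qed.
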